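(* Let $\mathfrak B,\mathfrak D^+,\mathfrak D^-$ be Banach spaces and let $I^+\colon\mathfrak D^+\to\mathfrak B$, $I^-\colon\mathfrak B\to\mathfrak D^-$ be injective continuous linear embeddings with dense ranges. Let $T\colon\mathfrak D^+\to\mathfrak D^-$ be a bounded linear operator, and let $T^\bullet=(I^-)^{-1}T(I^+)^{-1}$ be the operator in $\mathfrak B$ with domain $\{x\in I^+(\mathfrak D^+)\;:\;T(I^+)^{-1}x\in I^-(\mathfrak B)\}$, acting by $T^\bullet x=(I^-)^{-1}T(I^+)^{-1}x$. Then every $\lambda\in\mathbb C$ for which $T-\lambda I^-I^+\colon\mathfrak D^+\to\mathfrak D^-$ has a bounded inverse belongs to the resolvent set of $T^\bullet$, and $$(T^\bullet-\lambda)^{-1}=I^+\,(T-\lambda I^-I^+)^{-1}I^-.$$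
   Context: ''Has a bounded inverse'' means: the operator is a bijection of $\mathfrak D^+$ onto $\mathfrak D^-$ with bounded inverse. *)

From HB Require Import structures.
From mathcomp Require Import all_boot all_order all_algebra.
From mathcomp Require Import all_classical all_reals all_analysis.
From mathcomp Require Import complex.
Set Implicit Arguments. Unset Strict Implicit. Unset Printing Implicit Defensive.
Import Order.TTheory GRing.Theory Num.Theory.
Import numFieldNormedType.Exports.
Local Open Scope classical_set_scope.
Local Open Scope ring_scope.

(* Conventions: Banach spaces over the complex numbers C := R[i] (R a realType),
   i.e. complete normed modules over R[i]. *)

Definition is_bounded_inverse_of (C : numFieldType) (B : normedModType C)
    (dom : set B) (A : B -> B) (lambda : C) (Rinv : {linear B -> B}) :=
  [/\ continuous Rinv,
      forall y, dom (Rinv y),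
      forall y, A (Rinv y) - lambda *: Rinv y = y &
      forall x, dom x -> Rinv (A x - lambda *: x) = x].

Definition in_resolvent_set (C : numFieldType) (B : normedModType C)
    (dom : set B) (A : B -> B) (lambda : C) :=
  exists Rinv : {linear B -> B}, is_bounded_inverse_of dom A lambda Rinv.

Definition Tbullet_dom (C : numFieldType) (Dp B Dm : normedModType C)
    (Ip : Dp -> B) (Im : B -> Dm) (T : Dp -> Dm) : set B :=
  [set x | exists d, Ip d = x /\ exists y, T d = Im y].

Definition Tbullet (C : numFieldType) (Dp B Dm : normedModType C)
    (Ip : Dp -> B) (Im : B -> Dm) (T : Dp -> Dm) (x : B) : B :=
  xget 0 [set y | exists d, Ip d = x /\ T d = Im y].

From HB Require Import structures.
From mathcomp Require Import all_boot all_order all_algebra.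
From mathcomp Require Import all_classical all_reals all_analysis.
From mathcomp Require Import complex.
Set Implicit Arguments. Unset Strict Implicit. Unset Printing Implicit Defensive.
Import Order.TTheory GRing.Theory Num.Theory.
Import numFieldNormedType.Exports.
Local Open Scope classical_set_scope.
Local Open Scope ring_scope.
Local Open Scope complex_scope.

(* With [S = (T - lambda I^- I^+)^-1], the point [d := S (I^- y)] satisfies
   [T d = I^- (y + lambda I^+ d)], so [I^+ d] is in the domain of [T^bullet] and
   [(T^bullet - lambda) (I^+ d) = y]. Conversely, if [T d = I^- y] then [I^-]
   maps [(T^bullet - lambda) (I^+ d)] to [(T - lambda I^- I^+) d], which [S]
   sends back to [d]. *)

Section TbulletResolvent.
Variables (C : numFieldType) (Dp B Dm : normedModType C).
Variables (Ip : {linear Dp -> B}) (Im : {linear B -> Dm}) (T : {linear Dp -> Dm}).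
Hypotheses (Ip_inj : injective Ip) (Im_inj : injective Im).

Lemma Tbullet_Ip d y : T d = Im y -> Tbullet Ip Im T (Ip d) = y.
Proof.
move=> Tdy; rewrite /Tbullet.
case: (@xgetI _ 0 [set y | exists d', Ip d' = Ip d /\ T d' = Im y] y).
  by exists d.
move=> d' [/Ip_inj -> Td'_eq]; apply: Im_inj.
by rewrite -Td'_eq Tdy.
Qed.

Lemma Tbullet_dom_Ip d y : T d = Im y -> Tbullet_dom Ip Im T (Ip d).
Proof. by move=> Tdy; exists d; split => //; exists y. Qed.

Variables (lambda : C) (S : {linear Dm -> Dp}).
Hypotheses (S_left : forall d, S (T d - lambda *: Im (Ip d)) = d)
           (S_right : forall e, T (S e) - lambda *: Im (Ip (S e)) = e).

Lemma T_S_Im y : T (S (Im y)) = Im (y + lambda *: Ip (S (Im y))).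
Proof. by rewrite linearD linearZ /= -{2}(S_right (Im y)) subrK. Qed.

Lemma Tbullet_bounded_inverse :
  continuous Ip -> continuous Im -> continuous S ->
  is_bounded_inverse_of (Tbullet_dom Ip Im T) (Tbullet Ip Im T) lambda
    (Ip \o S \o Im)%FUN.
Proof.
move=> Ip_cont Im_cont S_cont; split.
- move=> x; apply: continuous_comp; first exact: Im_cont.
  by apply: continuous_comp; [exact: S_cont | exact: Ip_cont].
- by move=> y; apply: Tbullet_dom_Ip (T_S_Im y).
- by move=> y /=; rewrite (Tbullet_Ip (T_S_Im y)) addrK.
- move=> _ [d [<- [y Tdy]]] /=.
  by rewrite (Tbullet_Ip Tdy) linearB linearZ /= -Tdy S_left.
Qed.

End TbulletResolvent.

Theorem mainTheorem2 (R : realType)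
  (B Dp Dm : completeNormedModType R[i])
  (Ip : {linear Dp -> B}) (Im : {linear B -> Dm})
  (Ip_inj : injective Ip) (Ip_cont : continuous Ip) (Ip_dense : dense (range Ip))
  (Im_inj : injective Im) (Im_cont : continuous Im) (Im_dense : dense (range Im))
  (T : {linear Dp -> Dm}) (T_cont : continuous T)
  (lambda : R[i]) (S : {linear Dm -> Dp})
  (S_cont : continuous S)
  (S_left : forall d : Dp, S (T d - lambda *: Im (Ip d)) = d)
  (S_right : forall e : Dm, T (S e) - lambda *: Im (Ip (S e)) = e) :
  in_resolvent_set (Tbullet_dom Ip Im T) (Tbullet Ip Im T) lambda /\
  exists Rinv : {linear B -> B},
    is_bounded_inverse_of (Tbullet_dom Ip Im T) (Tbullet Ip Im T) lambda Rinv /\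
    (forall x : B, Rinv x = Ip (S (Im x))).
Proof.
have Rinv_ok := Tbullet_bounded_inverse Ip_inj Im_inj S_left S_right
  Ip_cont Im_cont S_cont.
split; first by exists (Ip \o S \o Im)%FUN.
by exists (Ip \o S \o Im)%FUN.
Qed.
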